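(* Let $\mathbb{R}^n_s$ be $\mathbb{R}^n$ with a non-degenerate symmetric bilinear form $\langle\cdot,\cdot\rangle$ of signature $(n-s,s)$, let $G\subset\mathrm{Iso}(\mathbb{R}^n_s)$ be a real Zariski-closed subgroup whose centralizer in $\mathrm{Iso}(\mathbb{R}^n_s)$ acts transitively on $\mathbb{R}^n$, and let $\mathfrak{g}$ be its Lie algebra with the symmetric bilinear form $(\cdot,\cdot)$ induced by the orbit metric. If $X,Y\in\mathfrak{g}$ and $Z=[X,Y]$, then $Z$ is orthogonal with respect to $(\cdot,\cdot)$ to $\mathrm{span}\{X,Y,Z\}$.
   Context: Elements of $\mathfrak{g}$ are written $(A,v)$ (matrices $\begin{pmatrix}A&v\\0&0\end{pmatrix}$). For fixed $p\in\mathbb{R}^n$, the orbit metric form on $\mathfrak{g}$ is $(X,Y)=\langle A_Xp+v_X,\,A_Yp+v_Y\rangle$, i.e. the pullback of $\langle\cdot,\cdot\rangle$ on the orbit $G.p$ via the orbit map; it satisfies $([X,Y],Z)=-(Y,[X,Z])$, and $\mathfrak{g}$ is 2-step nilpotent. *)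

From HB Require Import structures.
From mathcomp Require Import all_boot all_order all_algebra.
From mathcomp Require Import all_classical all_reals all_analysis.
Set Implicit Arguments. Unset Strict Implicit. Unset Printing Implicit Defensive.
Import Order.TTheory GRing.Theory Num.Theory.
Local Open Scope ring_scope.

Section Defs.
Variables (R : realType) (n : nat).

(* Affine maps x |-> A x + v of R^n, i.e. matrices [A v; 0 1]. *)
Definition aff := ('M[R]_n * 'cV[R]_n)%type.

Definition aff_id : aff := (1%:M, 0).
Definition aff_mul (g h : aff) : aff := (g.1 *m h.1, g.1 *m h.2 + g.2).
Definition aff_act (g : aff) (x : 'cV[R]_n) : 'cV[R]_n := g.1 *m x + g.2.

Definition bform (S : 'M[R]_n) (x y : 'cV[R]_n) : R := (x^T *m S *m y) 0 0.

Definition signature_form (S : 'M[R]_n) (s : nat) : Prop :=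
  (s <= n)%N /\ S^T = S /\
  exists P : 'M[R]_n, P \in unitmx /\
    P^T *m S *m P = diag_mx (\row_(i < n) if (i < n - s)%N then 1 else -1).

Definition iso (S : 'M[R]_n) (g : aff) : Prop := g.1^T *m S *m g.1 = S.

Inductive polyfun : (aff -> R) -> Prop :=
| pf_const c : polyfun (fun _ => c)
| pf_coordA i j : polyfun (fun g => g.1 i j)
| pf_coordv i : polyfun (fun g => g.2 i 0)
| pf_add f h : polyfun f -> polyfun h -> polyfun (fun g => f g + h g)
| pf_mul f h : polyfun f -> polyfun h -> polyfun (fun g => f g * h g).

Definition zariski_closed (G : aff -> Prop) : Prop :=
  exists F : (aff -> R) -> Prop, (forall f, F f -> polyfun f) /\
    forall g, G g <-> (forall f, F f -> f g = 0).

Definition subgroup_of_iso (S : 'M[R]_n) (G : aff -> Prop) : Prop :=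
  (forall g, G g -> iso S g) /\ G aff_id /\
  (forall g h, G g -> G h -> G (aff_mul g h)) /\
  (forall g, G g -> exists h, G h /\ aff_mul g h = aff_id /\ aff_mul h g = aff_id).

Definition centralizer_transitive (S : 'M[R]_n) (G : aff -> Prop) : Prop :=
  forall x y : 'cV[R]_n, exists h, iso S h /\
    (forall g, G g -> aff_mul h g = aff_mul g h) /\ aff_act h x = y.

(* Lie algebra of G: the tangent space at the identity, i.e. velocities
   (at t = 0) of curves in G through the identity. Elements (X, u) stand
   for the matrices [X u; 0 0]. *)
Definition lie_alg (G : aff -> Prop) (X : aff) : Prop :=
  exists c : R -> aff, (forall t, G (c t)) /\ c 0 = aff_id /\
    (forall i j, is_derive (0 : R) (1 : R) (fun t => (c t).1 i j) (X.1 i j)) /\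
    (forall i, is_derive (0 : R) (1 : R) (fun t => (c t).2 i 0) (X.2 i 0)).

(* Lie bracket (commutator of the (n+1)x(n+1) matrices) *)
Definition lie_bracket (X Y : aff) : aff :=
  (X.1 *m Y.1 - Y.1 *m X.1, X.1 *m Y.2 - Y.1 *m X.2).

Definition aff_add (X Y : aff) : aff := (X.1 + Y.1, X.2 + Y.2).
Definition aff_scale (a : R) (X : aff) : aff := (a *: X.1, a *: X.2).

Definition orbit_form (S : 'M[R]_n) (p : 'cV[R]_n) (X Y : aff) : R :=
  bform S (aff_act X p) (aff_act Y p).

End Defs.

(* Elements of the Lie algebra are S-skew and commute with every element h of
   the centralizer.  Hence, for such U and V, the orbit form at h(0) equals
   <h U(0), h V(0)> = <U(0), V(0)>: it does not depend on the base point,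
   because the centralizer is transitive.  The function
   d |-> <U d + u, V d + v> being constant, its quadratic part <U d, V d> and
   its linear part <u, V d> + <U d, v> vanish.  The linear part together with
   skewness gives the invariance ([X,Y],W) = -(Y,[X,W]), from which
   ([X,Y],X) = ([X,Y],Y) = 0; the quadratic part, with one more use of the
   linear part, handles ([X,Y],[X,Y]). *)
From HB Require Import structures.
From mathcomp Require Import all_boot all_order all_algebra.
From mathcomp Require Import all_classical all_reals all_analysis.
From mathcomp Require Import lra.
Set Implicit Arguments. Unset Strict Implicit. Unset Printing Implicit Defensive.
Import Order.TTheory GRing.Theory Num.Theory.
Local Open Scope ring_scope.

Section MatrixDerivative.
Variable R : realType.

Definition mx_derive0 m k (M : R -> 'M[R]_(m, k)) (D : 'M[R]_(m, k)) :=
  forall i j, is_derive (0 : R) (1 : R) (fun t => M t i j) (D i j).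

Lemma mx_derive0_cst m k (A : 'M[R]_(m, k)) : mx_derive0 (fun _ => A) 0.
Proof. by move=> i j; rewrite mxE; exact: is_derive_cst. Qed.

Lemma mx_derive0D m k (M N : R -> 'M[R]_(m, k)) D E :
  mx_derive0 M D -> mx_derive0 N E -> mx_derive0 (fun t => M t + N t) (D + E).
Proof.
move=> dM dN i j; rewrite mxE.
have -> : (fun t => (M t + N t) i j) = (fun t => M t i j) + (fun t => N t i j).
  by apply/funext => t; rewrite mxE.
exact: is_deriveD.
Qed.

Lemma mx_derive0_tr m k (M : R -> 'M[R]_(m, k)) D :
  mx_derive0 M D -> mx_derive0 (fun t => (M t)^T) D^T.
Proof.
move=> dM i j; rewrite mxE.
have -> : (fun t => (M t)^T i j) = (fun t => M t j i).
  by apply/funext => t; rewrite mxE.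
exact: dM.
Qed.

Lemma mx_derive0M m k l (M : R -> 'M[R]_(m, k)) (N : R -> 'M[R]_(k, l)) D E :
  mx_derive0 M D -> mx_derive0 N E ->
  mx_derive0 (fun t => M t *m N t) (D *m N 0 + M 0 *m E).
Proof.
move=> dM dN i j.
have -> : (fun t => (M t *m N t) i j) = \sum_(q < k) (fun t => M t i q * N t q j).
  by apply/funext => t; rewrite mxE fct_sumE.
apply: is_derive_eq.
  by apply: is_derive_sum => q; exact: is_deriveM (dM i q) (dN q j).
rewrite [RHS]mxE !mxE -big_split /=; apply: eq_bigr => q _.
by rewrite /GRing.scale /= addrC mulrC [N 0 q j * _]mulrC.
Qed.

Lemma mx_derive0_unique m k (M : R -> 'M[R]_(m, k)) D D' :
  mx_derive0 M D -> mx_derive0 M D' -> D = D'.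
Proof.
move=> dD dD'; apply/matrixP => i j.
by rewrite -(@derive_val _ _ _ _ _ _ _ (dD i j)) (@derive_val _ _ _ _ _ _ _ (dD' i j)).
Qed.

End MatrixDerivative.

Section Bform.
Variables (R : realType) (n : nat) (S : 'M[R]_n).
Local Notation b := (bform S).

Lemma bformDl u v w : b (u + v) w = b u w + b v w.
Proof. by rewrite /bform linearD /= !mulmxDl mxE. Qed.

Lemma bformDr u v w : b w (u + v) = b w u + b w v.
Proof. by rewrite /bform !mulmxDr mxE. Qed.

Lemma bformNl u w : b (- u) w = - b u w.
Proof. by rewrite /bform linearN /= !mulNmx mxE. Qed.

Lemma bformNr u w : b w (- u) = - b w u.
Proof. by rewrite /bform !mulmxN mxE. Qed.

Lemma bformBl u v w : b (u - v) w = b u w - b v w.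
Proof. by rewrite bformDl bformNl. Qed.

Lemma bformBr u v w : b w (u - v) = b w u - b w v.
Proof. by rewrite bformDr bformNr. Qed.

Lemma bformZr a u w : b w (a *: u) = a * b w u.
Proof. by rewrite /bform -scalemxAr mxE. Qed.

Lemma bform0r w : b w 0 = 0.
Proof. by rewrite /bform mulmx0 mxE. Qed.

Lemma bformC u v : S^T = S -> b u v = b v u.
Proof.
move=> S_sym; rewrite /bform -[in LHS](trmxK (u^T *m S *m v)) [in LHS]mxE.
by rewrite !trmx_mul trmxK S_sym mulmxA.
Qed.

Lemma bform_skew (A : 'M[R]_n) u v :
  A^T *m S + S *m A = 0 -> b (A *m u) v = - b u (A *m v).
Proof.
move=> /eqP; rewrite addr_eq0 => /eqP skA.
by rewrite /bform trmx_mul -(mulmxA u^T) skA mulmxN mulNmx !mulmxA mxE.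
Qed.

Lemma bform_iso (h : 'M[R]_n) u v :
  h^T *m S *m h = S -> b (h *m u) (h *m v) = b u v.
Proof.
move=> isoh; rewrite /bform trmx_mul -!mulmxA (mulmxA h^T) (mulmxA (h^T *m S)).
by rewrite isoh !mulmxA.
Qed.

(* Compare the values at d and -d. *)
Lemma bform_affine_const (A B : 'M[R]_n) u v :
  (forall d, b (A *m d + u) (B *m d + v) = b u v) ->
  forall d, b (A *m d) (B *m d) = 0 /\ b u (B *m d) + b (A *m d) v = 0.
Proof.
move=> const d; have := const d; have := const (- d).
rewrite !mulmxN !bformDl !bformDr !bformNl !bformNr opprK => e1 e2.
by split; lra.
Qed.

End Bform.

Section Commute.
Variables (R : realType) (n : nat).

(* [h.1 h.2; 0 1] commutes with [U.1 U.2; 0 0] *)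
Definition aff_commute (h U : aff R n) :=
  h.1 *m U.1 = U.1 *m h.1 /\ h.1 *m U.2 = U.1 *m h.2 + U.2.

Lemma aff_commute_bracket h U V :
  aff_commute h U -> aff_commute h V -> aff_commute h (lie_bracket U V).
Proof.
move=> [hU1 hU2] [hV1 hV2]; split => /=.
  have commM (A B : 'M[R]_n) : h.1 *m A = A *m h.1 -> h.1 *m B = B *m h.1 ->
      h.1 *m (A *m B) = (A *m B) *m h.1.
    by move=> hA hB; rewrite mulmxA hA -mulmxA hB mulmxA.
  by rewrite mulmxBr mulmxBl (commM _ _ hU1 hV1) (commM _ _ hV1 hU1).
rewrite mulmxBr !mulmxA hU1 hV1 -!mulmxA hU2 hV2 !mulmxDr mulmxBl !mulmxA.
by rewrite opprD addrACA.
Qed.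

Lemma lie_bracket_self (X : aff R n) : lie_bracket X X = (0, 0).
Proof. by rewrite /lie_bracket !subrr. Qed.

Lemma aff_commute_act h U : aff_commute h U -> aff_act U h.2 = h.1 *m U.2.
Proof. by move=> [_ ->]. Qed.

End Commute.

Section LieAlgebra.
Variables (R : realType) (n : nat) (G : aff R n -> Prop).

Lemma lie_alg_curve X : lie_alg G X -> exists c : R -> aff R n,
  [/\ forall t, G (c t), c 0 = aff_id R n, mx_derive0 (fun t => (c t).1) X.1
    & mx_derive0 (fun t => (c t).2) X.2].
Proof.
move=> [c [Gc [c0 [d1 d2]]]]; exists c; split=> // i j.
by rewrite (ord1 j); exact: d2.
Qed.

Lemma lie_alg_skew (S : 'M[R]_n) X :
  (forall g, G g -> iso S g) -> lie_alg G X -> X.1^T *m S + S *m X.1 = 0.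
Proof.
move=> G_iso /lie_alg_curve [c [Gc c0 d1 _]].
have dS := mx_derive0M (mx_derive0M (mx_derive0_tr d1) (mx_derive0_cst S)) d1.
have dS' : mx_derive0 (fun t => (c t).1^T *m S *m (c t).1) 0.
  have -> : (fun t => (c t).1^T *m S *m (c t).1) = fun _ => S.
    by apply/funext => t; exact: G_iso.
  exact: mx_derive0_cst.
have := mx_derive0_unique dS dS'.
by rewrite c0 /= trmx1 mulmx0 addr0 mulmx1 mul1mx.
Qed.

Lemma lie_alg_commute X (h : aff R n) :
  (forall g, G g -> aff_mul h g = aff_mul g h) -> lie_alg G X -> aff_commute h X.
Proof.
move=> hG /lie_alg_curve [c [Gc c0 d1 d2]].
have hc t := hG _ (Gc t).
split.
  have dl : mx_derive0 (fun t => (c t).1 *m h.1) (0 *m (c 0).1 + h.1 *m X.1).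
    have -> : (fun t => (c t).1 *m h.1) = fun t => h.1 *m (c t).1.
      by apply/funext => t; rewrite -[LHS]/(aff_mul (c t) h).1 -hc.
    exact: mx_derive0M (mx_derive0_cst h.1) d1.
  have := mx_derive0_unique dl (mx_derive0M d1 (mx_derive0_cst h.1)).
  by rewrite mul0mx add0r mulmx0 addr0.
have dl : mx_derive0 (fun t => (c t).1 *m h.2 + (c t).2)
    (0 *m (c 0).2 + h.1 *m X.2 + 0).
  have -> : (fun t => (c t).1 *m h.2 + (c t).2) = fun t => h.1 *m (c t).2 + h.2.
    by apply/funext => t; rewrite -[LHS]/(aff_mul (c t) h).2 -hc.
  exact: mx_derive0D (mx_derive0M (mx_derive0_cst h.1) d2) (mx_derive0_cst h.2).
have := mx_derive0_unique dl (mx_derive0D (mx_derive0M d1 (mx_derive0_cst h.2)) d2).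
by rewrite mul0mx add0r addr0 mulmx0 addr0.
Qed.

End LieAlgebra.

Section OrbitForm.
Variables (R : realType) (n : nat) (S : 'M[R]_n) (G : aff R n -> Prop).
Hypothesis S_sym : S^T = S.
Hypothesis hC : centralizer_transitive S G.
Local Notation b := (bform S).

Definition commutes_with_centralizer (U : aff R n) :=
  forall h, iso S h -> (forall g, G g -> aff_mul h g = aff_mul g h) -> aff_commute h U.

Lemma lie_alg_commutes_with_centralizer X :
  lie_alg G X -> commutes_with_centralizer X.
Proof. by move=> hX h _ hG; exact: lie_alg_commute hG hX. Qed.

Lemma commutes_with_centralizer_bracket U V :
  commutes_with_centralizer U -> commutes_with_centralizer V ->
  commutes_with_centralizer (lie_bracket U V).
Proof.
by move=> cU cV h isoh hG; apply: aff_commute_bracket; [apply: cU | apply: cV].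
Qed.

Lemma orbit_formDr p U V W :
  orbit_form S p U (aff_add V W) = orbit_form S p U V + orbit_form S p U W.
Proof. by rewrite /orbit_form /aff_act /= mulmxDl addrACA bformDr. Qed.

Lemma orbit_formZr p a U V :
  orbit_form S p U (aff_scale a V) = a * orbit_form S p U V.
Proof. by rewrite /orbit_form /aff_act /= -scalemxAl -scalerDr bformZr. Qed.

Lemma orbit_form0r p U : orbit_form S p U (0, 0) = 0.
Proof. by rewrite /orbit_form /aff_act mul0mx addr0 bform0r. Qed.

Lemma orbit_form_const U V p :
  commutes_with_centralizer U -> commutes_with_centralizer V ->
  orbit_form S p U V = b U.2 V.2.
Proof.
move=> cU cV; have [h [isoh [hG hp]]] := hC 0 p.
have h2 : h.2 = p by rewrite -hp /aff_act mulmx0 add0r.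
rewrite /orbit_form -h2 !aff_commute_act; [exact: bform_iso | exact: cV | exact: cU].
Qed.

Lemma orbit_form_affine_parts U V d :
  commutes_with_centralizer U -> commutes_with_centralizer V ->
  b (U.1 *m d) (V.1 *m d) = 0 /\ b U.2 (V.1 *m d) + b (U.1 *m d) V.2 = 0.
Proof.
move=> cU cV; apply: bform_affine_const => {}d.
exact: (orbit_form_const d cU cV).
Qed.

Lemma orbit_form_bracketl p X Y W :
  X.1^T *m S + S *m X.1 = 0 -> commutes_with_centralizer X ->
  commutes_with_centralizer Y -> commutes_with_centralizer W ->
  orbit_form S p (lie_bracket X Y) W = - orbit_form S p Y (lie_bracket X W).
Proof.
move=> skX cX cY cW.
rewrite !orbit_form_const //; try exact: commutes_with_centralizer_bracket.
have [_ lin] := orbit_form_affine_parts X.2 cY cW.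
rewrite /= bformBl bformBr bform_skew //; lra.
Qed.

Lemma orbit_form_bracketr p X Y W :
  Y.1^T *m S + S *m Y.1 = 0 -> commutes_with_centralizer X ->
  commutes_with_centralizer Y -> commutes_with_centralizer W ->
  orbit_form S p (lie_bracket X Y) W = orbit_form S p X (lie_bracket Y W).
Proof.
move=> skY cX cY cW.
rewrite !orbit_form_const //; try exact: commutes_with_centralizer_bracket.
have [_ lin] := orbit_form_affine_parts Y.2 cX cW.
rewrite /= bformBl bformBr [b (Y.1 *m _) _]bform_skew //; lra.
Qed.

Lemma orbit_form_bracket_self p X Y :
  X.1^T *m S + S *m X.1 = 0 -> Y.1^T *m S + S *m Y.1 = 0 ->
  commutes_with_centralizer X -> commutes_with_centralizer Y ->
  orbit_form S p (lie_bracket X Y) (lie_bracket X Y) = 0.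
Proof.
move=> skX skY cX cY.
rewrite orbit_form_const; try exact: commutes_with_centralizer_bracket.
have [quadX _] := orbit_form_affine_parts Y.2 cX cX.
have [quadY _] := orbit_form_affine_parts X.2 cY cY.
have [_ linXY] := orbit_form_affine_parts (X.1 *m Y.2) cX cY.
have cross : b (Y.1 *m X.2) (X.1 *m Y.2) = 0.
  have := @bform_skew _ _ S Y.1 X.2 (X.1 *m Y.2) skY.
  have := @bform_skew _ _ S X.1 (X.1 *m Y.2) Y.2 skX.
  lra.
have := bformC (X.1 *m Y.2) (Y.1 *m X.2) S_sym.
rewrite /= !bformBl !bformBr; lra.
Qed.

End OrbitForm.

Theorem lemma4p9 (R : realType) (n s : nat) (S : 'M[R]_n) (G : aff R n -> Prop)
  (hS : signature_form S s)
  (hG : subgroup_of_iso S G) (hZ : zariski_closed G)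
  (hC : centralizer_transitive S G)
  (p : 'cV[R]_n) (X Y : aff R n) (hX : lie_alg G X) (hY : lie_alg G Y) :
  let Z := lie_bracket X Y in
  forall a b c : R,
    orbit_form S p Z (aff_add (aff_add (aff_scale a X) (aff_scale b Y)) (aff_scale c Z)) = 0.
Proof.
move=> Z a b c.
have [_ [S_sym _]] := hS; have [G_iso _] := hG.
have skX := lie_alg_skew G_iso hX; have skY := lie_alg_skew G_iso hY.
have cX := lie_alg_commutes_with_centralizer (S := S) hX.
have cY := lie_alg_commutes_with_centralizer (S := S) hY.
have ZX : orbit_form S p Z X = 0.
  by rewrite (orbit_form_bracketl hC) // lie_bracket_self orbit_form0r oppr0.
have ZY : orbit_form S p Z Y = 0.
  by rewrite (orbit_form_bracketr hC) // lie_bracket_self orbit_form0r.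
have ZZ : orbit_form S p Z Z = 0 := orbit_form_bracket_self S_sym hC p skX skY cX cY.
by rewrite !orbit_formDr !orbit_formZr ZX ZY ZZ !mulr0 !addr0.
Qed.
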